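(* For every $n\ge1$, the affine curvatures of the inflection-point polygon $r_1,\dots,r_{N(n)}$ of the Hilbert curve $H_n$ satisfy, for all $2\le k\le N(n)-2$, $$\kappa_k\in\{1,-1,2,-2,\tfrac12,-\tfrac12,3,\tfrac13\},\qquad \bar\kappa_k=0.$$
   Context: The Hilbert curve at step $n$ is the polygon $H_n$ in the unit square defined recursively: $H_1$ has vertices $(\tfrac14,\tfrac14),(\tfrac14,\tfrac34),(\tfrac34,\tfrac34),(\tfrac34,\tfrac14)$; $H_{n+1}$ is the concatenation (in this order, joined by the connecting edges) of $f_1(H_n),f_2(H_n),f_3(H_n),f_4(H_n)$, where $f_1(x,y)=(\tfrac y2,\tfrac x2)$, $f_2(x,y)=(\tfrac x2,\tfrac y2+\tfrac12)$, $f_3(x,y)=(\tfrac x2+\tfrac12,\tfrac y2+\tfrac12)$, $f_4(x,y)=(1-\tfrac y2,\tfrac12-\tfrac x2)$, each copy traversed in the order inherited from $H_n$. The inflection points $r_1,\dots,r_{N(n)}$ of $H_n$ are the vertices of $H_n$, in order, after deleting every interior vertex whose two neighbouring vertices are collinear with it (endpoints kept). Affine curvatures: $t_k=r_{k+1}-r_k$, $[a,b]=a_1b_2-a_2b_1$, and for $2\le k\le N-2$ with $[t_{k-1},t_k]\ne0$, $\kappa_k=\dfrac{[t_k,t_{k+1}]}{[t_{k-1},t_k]}$, $\bar\kappa_k=\dfrac{[t_{k-1},t_{k+1}]}{[t_{k-1},t_k]}$. *)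

From HB Require Import structures.
From mathcomp Require Import all_boot all_order all_algebra.
Set Implicit Arguments. Unset Strict Implicit. Unset Printing Implicit Defensive.
Import Order.TTheory GRing.Theory Num.Theory.
Local Open Scope ring_scope.

Definition pt := (rat * rat)%type.
Definition pt0 : pt := (0, 0).

Definition psub (p q : pt) : pt := (p.1 - q.1, p.2 - q.2).
Definition cross (a b : pt) : rat := a.1 * b.2 - a.2 * b.1.

Definition H1 : seq pt :=
  [:: (1/4, 1/4); (1/4, 3/4); (3/4, 3/4); (3/4, 1/4)].

Definition f1 (p : pt) : pt := (p.2 / 2, p.1 / 2).
Definition f2 (p : pt) : pt := (p.1 / 2, p.2 / 2 + 1/2).
Definition f3 (p : pt) : pt := (p.1 / 2 + 1/2, p.2 / 2 + 1/2).
Definition f4 (p : pt) : pt := (1 - p.2 / 2, 1/2 - p.1 / 2).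

(* hilb_aux m = vertex list of H_(m+1) *)
Fixpoint hilb_aux (m : nat) : seq pt :=
  match m with
  | 0%N => H1
  | m'.+1 => let H := hilb_aux m' in
             map f1 H ++ map f2 H ++ map f3 H ++ map f4 H
  end.

Definition hilbert (n : nat) : seq pt := hilb_aux n.-1.

(* Inflection points: delete every interior vertex collinear with its two
   neighbouring vertices (neighbours taken in the original vertex list);
   endpoints are kept. *)
Definition keep (s : seq pt) (i : nat) : bool :=
  (i == 0%N) || (i == (size s).-1) ||
  (cross (psub (nth pt0 s i) (nth pt0 s i.-1))
         (psub (nth pt0 s i.+1) (nth pt0 s i)) != 0).

Definition inflections (s : seq pt) : seq pt :=
  [seq nth pt0 s i | i <- iota 0 (size s) & keep s i].

(* 1-based r_k *)
Definition rpt (n k : nat) : pt := nth pt0 (inflections (hilbert n)) k.-1.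
Definition Ninf (n : nat) : nat := size (inflections (hilbert n)).

Definition tvec (n k : nat) : pt := psub (rpt n k.+1) (rpt n k).

Definition kappa (n k : nat) : rat :=
  cross (tvec n k) (tvec n k.+1) / cross (tvec n k.-1) (tvec n k).
Definition kappabar (n k : nat) : rat :=
  cross (tvec n k.-1) (tvec n k.+1) / cross (tvec n k.-1) (tvec n k).

From HB Require Import structures.
From mathcomp Require Import all_boot all_order all_algebra.
From mathcomp Require Import ring zify.
Set Implicit Arguments. Unset Strict Implicit. Unset Printing Implicit Defensive.
Import Order.TTheory GRing.Theory Num.Theory.
Local Open Scope ring_scope.

(* The edge vectors t_k of the inflection polygon are the sums of the maximal
   runs of parallel consecutive edges of H_n.  Up to the factor 2^-n, the edges
   of H_(m+1) are unit vectors D_(m+1) = sD_m, up, D_m, right, D_m, down, tD_m,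
   where s and t are the reflections in the two diagonals; both multiply cross
   products by -1.  Hence the merged edges of D_(m+1) are three copies of those
   of D_m (reflected) glued at three junctions, and a triple of consecutive
   merged edges either lies in one copy, where the claim holds by induction, or
   in a junction window.  These windows only involve the first and last three
   merged edges of D_m and the first and last edge of D_m, which depend only on
   the parity of m, so they are checked by evaluation. *)

Section Triplewise.
Variables (T : Type) (P : T -> T -> T -> bool).

Fixpoint triplewise (s : seq T) : bool :=
  if s is a :: ((b :: c :: _) as s') then P a b c && triplewise s' else true.

Lemma triplewise_cons x s : triplewise (x :: s) -> triplewise s.
Proof. by case: s => [|b [|c s]] //= /andP[]. Qed.

Lemma triplewise_catl s1 s2 : triplewise (s1 ++ s2) -> triplewise s1.
Proof.
elim: s1 => // a [|b [|c s1]] IH //=.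
by case/andP => -> /IH.
Qed.

Lemma triplewise_glue s1 p q s2 :
  triplewise (s1 ++ [:: p; q]) -> triplewise [:: p, q & s2] ->
  triplewise (s1 ++ [:: p, q & s2]).
Proof.
elim: s1 => // a [|b [|c s1]] IH //=; first by case/andP => ->.
- by case/andP => -> /andP[-> _].
- by case/andP => -> /IH H /H.
Qed.

Lemma triplewise_nth x0 s i : triplewise s -> (i.+2 < size s)%N ->
  P (nth x0 s i) (nth x0 s i.+1) (nth x0 s i.+2).
Proof.
elim: s i => // a [|b [|c s]] IH [|i] //=; first by case/andP.
by case/andP => _ /IH; apply.
Qed.

Lemma triplewise_splice s1 p q J r t s2 :
  triplewise (s1 ++ [:: p; q]) -> triplewise [:: p, q & J ++ [:: r; t]] ->
  triplewise [:: r, t & s2] ->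
  triplewise (s1 ++ [:: p, q & J ++ [:: r, t & s2]]).
Proof.
move=> P1 P2 P3; apply: triplewise_glue => //.
by rewrite -cat_cons -cat_cons; apply: triplewise_glue.
Qed.

End Triplewise.

Lemma triplewise_map T U (P : U -> U -> U -> bool) (Q : T -> T -> T -> bool)
    (f : T -> U) :
  (forall a b c, P (f a) (f b) (f c) = Q a b c) ->
  forall s, triplewise P (map f s) = triplewise Q s.
Proof.
by move=> PQ; elim=> // a [|b [|c s]] IH //=; rewrite PQ; congr (_ && _); exact: IH.
Qed.

Lemma pair_eq (a b c d : rat) : a = c -> b = d -> ((a, b) : pt) = (c, d).
Proof. by move=> -> ->. Qed.

Definition padd (p q : pt) : pt := (p.1 + q.1, p.2 + q.2).

Lemma paddA : associative padd.
Proof. by move=> p q r; rewrite /padd /= !addrA. Qed.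

(* [acc] is the sum of the current run of edges, [e] the last edge of that run. *)
Fixpoint merge_parallel_from (acc e : pt) (l : seq pt) : seq pt :=
  if l is e' :: l' then
    if cross e e' == 0 then merge_parallel_from (padd acc e') e' l'
    else acc :: merge_parallel_from e' e' l'
  else [:: acc].

Definition merge_parallel (l : seq pt) : seq pt :=
  if l is e :: l' then merge_parallel_from e e l' else [::].

Lemma merge_parallel_from_cat l acc e : exists G g,
  merge_parallel_from acc e l = rcons G g /\
  forall l', merge_parallel_from acc e (l ++ l') =
             G ++ merge_parallel_from g (last e l) l'.
Proof.
elim: l acc e => [|e' l IH] acc e /=; first by exists [::], acc.
case: ifP => _; first exact: IH.
have [G [g [-> catE]]] := IH e' e'.
by exists (acc :: G), g; split => // l'; rewrite catE.
Qed.

Lemma merge_parallel_from_padd d l acc e y ys :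
  merge_parallel_from acc e l = y :: ys ->
  merge_parallel_from (padd d acc) e l = padd d y :: ys.
Proof.
elim: l acc e y ys => [|e' l IH] acc e y ys /=; first by case=> -> ->.
case: ifP => _; last by case=> -> ->.
by rewrite -paddA; apply: IH.
Qed.

(* The merged edges around [j] when a polygon whose last run sums to [g] and ends
   with the edge [la] is joined by [j] to one whose first run sums to [h] and
   starts with the edge [hb]. *)
Definition junction (la j hb g h : pt) : seq pt :=
  if cross la j == 0 then
    if cross j hb == 0 then [:: padd (padd g j) h] else [:: padd g j; h]
  else if cross j hb == 0 then [:: g; padd j h] else [:: g; j; h].

Lemma merge_parallel_cat A j B GA g h GB :
  merge_parallel A = rcons GA g -> merge_parallel B = h :: GB ->
  merge_parallel (A ++ j :: B) =
    GA ++ junction (last pt0 A) j (head pt0 B) g h ++ GB.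
Proof.
case: A => [|a A]; first by case: GA.
case: B => [//|b B] /=.
have [G [g' [-> ->]]] := merge_parallel_from_cat A a a.
move=> /eqP; rewrite eqseq_rcons => /andP[/eqP -> /eqP ->] mB.
congr (_ ++ _); rewrite /= /junction.
case: ifP => _; case: ifP => _ /=; rewrite ?mB //.
- exact: (merge_parallel_from_padd (padd g j) mB).
- by rewrite (merge_parallel_from_padd j mB).
Qed.

Definition curvatures : seq rat := [:: 1; -1; 2; -2; 1/2; -(1/2); 3; 1/3].

Definition admissible (a b c : pt) : bool :=
  [&& cross a b != 0, cross a c == 0 & cross b c / cross a b \in curvatures].

Section CrossSimilarity.
Variables (f : pt -> pt) (k : rat).
Hypotheses (k_neq0 : k != 0) (crossf : forall a b, cross (f a) (f b) = k * cross a b)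
  (f_add : forall a b, f (padd a b) = padd (f a) (f b)).

Lemma merge_parallel_from_map l acc e :
  merge_parallel_from (f acc) (f e) (map f l) = map f (merge_parallel_from acc e l).
Proof.
elim: l acc e => [|e' l IH] acc e //=.
rewrite crossf mulf_eq0 (negbTE k_neq0) /=.
by case: (cross e e' == 0); rewrite /= -IH ?f_add.
Qed.

Lemma merge_parallel_map l : merge_parallel (map f l) = map f (merge_parallel l).
Proof. by case: l => //= e l; rewrite merge_parallel_from_map. Qed.

Lemma admissible_map a b c : admissible (f a) (f b) (f c) = admissible a b c.
Proof.
rewrite /admissible !crossf !mulf_eq0 (negbTE k_neq0) /=.
case: (cross a b =P 0) => //= ab_neq0.
by rewrite invfM mulrACA mulfV // mul1r.
Qed.

Lemma triplewise_admissible_map s :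
  triplewise admissible (map f s) = triplewise admissible s.
Proof. by apply: triplewise_map => a b c; apply: admissible_map. Qed.

End CrossSimilarity.

Definition edges (s : seq pt) : seq pt :=
  if s is x :: r then pairmap (fun p q => psub q p) x r else [::].

Lemma size_edges s : size (edges s) = (size s).-1.
Proof. by case: s => //= x r; rewrite size_pairmap. Qed.

Lemma nth_edges s i : (i.+1 < size s)%N ->
  nth pt0 (edges s) i = psub (nth pt0 s i.+1) (nth pt0 s i).
Proof. by case: s => //= x r lt_i_r; rewrite (nth_pairmap pt0). Qed.

Lemma edges_cat A B : A != [::] -> B != [::] ->
  edges (A ++ B) = edges A ++ psub (head pt0 B) (last pt0 A) :: edges B.
Proof. by case: A => [//|a A]; case: B => [//|b B] _ _; rewrite /= pairmap_cat. Qed.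

Lemma edges_map (f g : pt -> pt) :
  (forall p q, psub (f q) (f p) = g (psub q p)) ->
  forall s, edges (map f s) = map g (edges s).
Proof. by move=> fg [|x r] //=; elim: r x => [|y r IH] x //=; rewrite fg IH. Qed.

(* The inflection points of the polygon [.., a, b & r] from [b] on. *)
Fixpoint inflections_from (a b : pt) (r : seq pt) : seq pt :=
  if r is c :: r' then
    if cross (psub b a) (psub c b) != 0 then b :: inflections_from b c r'
    else inflections_from b c r'
  else [:: b].

Lemma keep_interior P a b c r :
  keep (P ++ [:: a, b, c & r]) (size P).+1 = (cross (psub b a) (psub c b) != 0).
Proof.
have notlast : ((size P).+1 == (size P + (size r).+3).-1) = false.
  by rewrite addnS /= -addn1 eqn_add2l.
have inP : ((size P).+2 < size P)%N = false by rewrite ltnNge ltnW.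
have offset : ((size P).+2 - size P)%N = 2%N by rewrite -addn2 addKn.
rewrite /keep size_cat /= !nth_cat ltnn subnn ltnNge leqnSn /= subSnn.
by rewrite notlast inP offset.
Qed.

Lemma inflections_suffix P a b r :
  [seq nth pt0 (P ++ [:: a, b & r]) i |
     i <- iota (size P).+1 (size r).+1 & keep (P ++ [:: a, b & r]) i] =
  inflections_from a b r.
Proof.
elim: r P a b => [|c r IH] P a b.
  by rewrite /= /keep size_cat addn2 eqxx /= nth_cat ltnNge leqnSn /= subSnn.
rewrite (_ : iota _ (size (c :: r)).+1 = (size P).+1 :: iota (size P).+2 (size r).+1) //.
rewrite -[_ :: iota _ _]cat1s filter_cat map_cat [filter _ [:: _]]/= keep_interior.
have := IH (rcons P a) b c; rewrite size_rcons -cats1 -catA /= => ->.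
case: ifP => //= _; congr (_ :: _).
by rewrite nth_cat ltnNge leqnSn /= subSn // subnn.
Qed.

Lemma inflections_cons2 x y r : inflections [:: x, y & r] = x :: inflections_from x y r.
Proof.
rewrite /inflections (_ : iota 0 (size [:: x, y & r]) = 0%N :: iota 1 (size r).+1) //.
rewrite -[_ :: iota _ _]cat1s filter_cat map_cat.
by have := inflections_suffix [::] x y r; rewrite /= => ->.
Qed.

Lemma edges_inflections_from a b p r :
  pairmap (fun p q => psub q p) p (inflections_from a b r) =
  merge_parallel_from (psub b p) (psub b a) (pairmap (fun p q => psub q p) b r).
Proof.
elim: r a b p => [|c r IH] a b p //=.
case: ifP => /= turn; rewrite IH; first by rewrite (negbTE turn).
rewrite (negbFE turn); congr merge_parallel_from.
by rewrite /padd /psub /=; congr pair; ring.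
Qed.

Lemma edges_inflections s : edges (inflections s) = merge_parallel (edges s).
Proof.
case: s => [|x [|y r]] //.
by rewrite inflections_cons2 /= edges_inflections_from.
Qed.

Definition dU : pt := (0, 1).
Definition dR : pt := (1, 0).
Definition dD : pt := (0, -1).
Definition dL : pt := (-1, 0).

Definition refl_diag (p : pt) : pt := (p.2, p.1).
Definition refl_antidiag (p : pt) : pt := (- p.2, - p.1).
Definition scale (u : rat) (p : pt) : pt := (u * p.1, u * p.2).

Definition dirs_step (D : seq pt) : seq pt :=
  map refl_diag D ++ dU :: D ++ dR :: D ++ dD :: map refl_antidiag D.

Fixpoint hilbert_dirs (m : nat) : seq pt :=
  if m is m'.+1 then dirs_step (hilbert_dirs m') else [:: dU; dR; dD].

Lemma hilbert_dirsS m : hilbert_dirs m.+1 = dirs_step (hilbert_dirs m).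
Proof. by []. Qed.

Lemma cross_refl_diag a b : cross (refl_diag a) (refl_diag b) = -1 * cross a b.
Proof. by rewrite /cross /=; ring. Qed.

Lemma cross_refl_antidiag a b :
  cross (refl_antidiag a) (refl_antidiag b) = -1 * cross a b.
Proof. by rewrite /cross /=; ring. Qed.

Lemma cross_scale u a b : cross (scale u a) (scale u b) = (u * u) * cross a b.
Proof. by rewrite /cross /=; ring. Qed.

Lemma refl_diag_add a b : refl_diag (padd a b) = padd (refl_diag a) (refl_diag b).
Proof. by []. Qed.

Lemma refl_antidiag_add a b :
  refl_antidiag (padd a b) = padd (refl_antidiag a) (refl_antidiag b).
Proof. by apply: pair_eq => /=; rewrite opprD. Qed.

Lemma scale_add u a b : scale u (padd a b) = padd (scale u a) (scale u b).
Proof. by apply: pair_eq => /=; rewrite mulrDr. Qed.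

Fact neg1_neq0 : (-1 : rat) != 0. Proof. by []. Qed.

Lemma merge_parallel_refl_diag l :
  merge_parallel (map refl_diag l) = map refl_diag (merge_parallel l).
Proof. exact: (merge_parallel_map neg1_neq0 cross_refl_diag refl_diag_add). Qed.

Lemma merge_parallel_refl_antidiag l :
  merge_parallel (map refl_antidiag l) = map refl_antidiag (merge_parallel l).
Proof. exact: (merge_parallel_map neg1_neq0 cross_refl_antidiag refl_antidiag_add). Qed.

Lemma triplewise_refl_diag s :
  triplewise admissible (map refl_diag s) = triplewise admissible s.
Proof. exact: (triplewise_admissible_map neg1_neq0 cross_refl_diag). Qed.

Lemma triplewise_refl_antidiag s :
  triplewise admissible (map refl_antidiag s) = triplewise admissible s.
Proof. exact: (triplewise_admissible_map neg1_neq0 cross_refl_antidiag). Qed.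

Fixpoint mesh (m : nat) : rat := if m is m'.+1 then mesh m' / 2 else 1/2.

Lemma mesh_neq0 m : mesh m != 0.
Proof. by elim: m => //= m IH; rewrite mulf_neq0 // invr_neq0. Qed.

Lemma hilb_auxS m : hilb_aux m.+1 =
  map f1 (hilb_aux m) ++ map f2 (hilb_aux m) ++
  map f3 (hilb_aux m) ++ map f4 (hilb_aux m).
Proof. by []. Qed.

Lemma hilb_aux_ends m :
  [/\ hilb_aux m != [::],
      head pt0 (hilb_aux m) = (mesh m / 2, mesh m / 2) &
      last pt0 (hilb_aux m) = (1 - mesh m / 2, mesh m / 2)].
Proof.
elim: m => [|m [ne hd lst]]; first by [].
move: ne hd lst; rewrite hilb_auxS; case: (hilb_aux m) => [//|x s] _ /= -> lst.
split => //.
rewrite !(last_cat, last_cons) last_map lst /f4 /=.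
by apply: pair_eq; field.
Qed.

Lemma edges_hilb_aux m : edges (hilb_aux m) = map (scale (mesh m)) (hilbert_dirs m).
Proof.
elim: m => [|m IH]; first by [].
have [ne hd lst] := hilb_aux_ends m.
move: ne hd lst IH; rewrite hilb_auxS.
case: (hilb_aux m) => [//|x s] _ hx lst IH; rewrite /= in hx lst; subst x.
rewrite !edges_cat //.
rewrite (@edges_map f1 (scale (1/2) \o refl_diag));
  last by move=> p q; apply: pair_eq => /=; field.
rewrite (@edges_map f2 (scale (1/2))); last by move=> p q; apply: pair_eq => /=; field.
rewrite (@edges_map f3 (scale (1/2))); last by move=> p q; apply: pair_eq => /=; field.
rewrite (@edges_map f4 (scale (1/2) \o refl_antidiag));
  last by move=> p q; apply: pair_eq => /=; field.
rewrite IH hilbert_dirsS /dirs_step !(map_cat, map_cons) -!map_comp /= !last_map lst.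
congr (_ ++ _ :: _ ++ _ :: _ ++ _ :: _); try apply: eq_map => v.
all: by apply: pair_eq => /=; field.
Qed.

Lemma merge_parallel_dirs_step D a1 M b1 (hd := head pt0 D) (lst := last pt0 D) :
  merge_parallel D = a1 :: rcons M b1 ->
  merge_parallel (dirs_step D) =
    map refl_diag (a1 :: M) ++ junction (refl_diag lst) dU hd (refl_diag b1) a1 ++
    M ++ junction lst dR hd b1 a1 ++
    M ++ junction lst dD (refl_antidiag hd) b1 (refl_antidiag a1) ++
    map refl_antidiag (rcons M b1).
Proof.
case: D @hd @lst => [//|x s] hd lst mD.
have mDr : merge_parallel (x :: s) = rcons (a1 :: M) b1 by rewrite mD.
have mdiag := merge_parallel_refl_diag (x :: s).
have manti := merge_parallel_refl_antidiag (x :: s).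
rewrite mDr map_rcons in mdiag; rewrite mD in manti.
have m3 := merge_parallel_cat dD mDr manti.
have m2 := merge_parallel_cat dR mDr m3.
rewrite /dirs_step (merge_parallel_cat dU mdiag m2).
by rewrite /= last_map.
Qed.

Definition framed (D : seq pt) (a1 a2 a3 b3 b2 b1 : pt) : Prop :=
  (exists mid, merge_parallel D = [:: a1, a2, a3 & mid ++ [:: b3; b2; b1]]) /\
  triplewise admissible (merge_parallel D).

Lemma framed_dirs_step D a1 a2 a3 b3 b2 b1 (hd := head pt0 D) (lst := last pt0 D) :
  framed D a1 a2 a3 b3 b2 b1 ->
  triplewise admissible [:: refl_diag b3, refl_diag b2 &
    junction (refl_diag lst) dU hd (refl_diag b1) a1 ++ [:: a2; a3]] ->
  triplewise admissible [:: b3, b2 & junction lst dR hd b1 a1 ++ [:: a2; a3]] ->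
  triplewise admissible [:: b3, b2 &
    junction lst dD (refl_antidiag hd) b1 (refl_antidiag a1) ++
    [:: refl_antidiag a2; refl_antidiag a3]] ->
  framed (dirs_step D) (refl_diag a1) (refl_diag a2) (refl_diag a3)
    (refl_antidiag b3) (refl_antidiag b2) (refl_antidiag b1).
Proof.
move=> [[mid mD] ok] J1 J2 J3.
set M := [:: a2, a3 & mid ++ [:: b3; b2]].
have mD' : merge_parallel D = a1 :: rcons M b1 by rewrite mD /= rcons_cat.
rewrite /framed (merge_parallel_dirs_step mD').
set K1 := junction _ dU _ _ _; set K2 := junction _ dR _ _ _.
set K3 := junction _ dD _ _ _.
split.
  exists (map refl_diag mid ++ [:: refl_diag b3; refl_diag b2] ++
          K1 ++ M ++ K2 ++ M ++ K3 ++
          [:: refl_antidiag a2; refl_antidiag a3] ++ map refl_antidiag mid).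
  by rewrite /M /= !(map_cat, map_rcons, rcons_cat); repeat rewrite -catA /=.
rewrite mD' in ok.
have okM : triplewise admissible (a1 :: M).
  by move: ok; rewrite -rcons_cons -cats1 => /triplewise_catl.
have okMb : triplewise admissible (rcons M b1) := triplewise_cons ok.
have -> : map refl_diag (a1 :: M) ++ K1 ++ M ++ K2 ++ M ++ K3 ++
            map refl_antidiag (rcons M b1) =
  map refl_diag [:: a1, a2, a3 & mid] ++ [:: refl_diag b3, refl_diag b2 & K1 ++
  [:: a2, a3 & mid ++ [:: b3, b2 & K2 ++ [:: a2, a3 & mid ++ [:: b3, b2 & K3 ++
  [:: refl_antidiag a2, refl_antidiag a3 &
  map refl_antidiag (mid ++ [:: b3; b2; b1])]]]]]].
  by rewrite /M /= !(map_cat, map_rcons, rcons_cat); repeat rewrite -catA /=.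
have okM' := triplewise_cons okM.
apply: triplewise_splice => //.
  by rewrite -[[:: _; _]]/(map refl_diag [:: b3; b2]) -map_cat triplewise_refl_diag.
apply: (triplewise_splice (s1 := [:: a2, a3 & mid])) => //.
apply: (triplewise_splice (s1 := [:: a2, a3 & mid])) => //.
by move: okMb; rewrite -triplewise_refl_antidiag /M /= rcons_cat.
Qed.

Lemma hilbert_dirs_ends m :
  [/\ hilbert_dirs m != [::],
      head pt0 (hilbert_dirs m) = (if odd m then dR else dU) &
      last pt0 (hilbert_dirs m) = (if odd m then dR else dD)].
Proof.
elim: m => [|m [+ hd lst]] //; rewrite hilbert_dirsS /dirs_step.
case: (hilbert_dirs m) hd lst => [//|x s] /= -> lst _.
by rewrite !(last_cat, last_cons) last_map lst; case: (odd m).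
Qed.

Lemma hilbert_dirs_framed m : (0 < m)%N ->
  if odd m then framed (hilbert_dirs m) dR dU dL dL dD dR
  else framed (hilbert_dirs m) dU dR dD dU dR dD.
Proof.
elim: m => [//|[|m] IH _].
  by split=> //; exists [:: (0, 2); dR; dD; dR; dU; dR; (0, -2)]; vm_compute.
have [_ hd lst] := hilbert_dirs_ends m.+1.
move: (IH isT) hd lst; rewrite /= negbK.
case: (odd m) => fr hd lst; have := framed_dirs_step fr; rewrite /= hd lst.
(* The three junction windows are decided by evaluation. *)
all: by move=> /(_ isT isT isT).
Qed.

Lemma admissible_merged_dirs m : triplewise admissible (merge_parallel (hilbert_dirs m)).
Proof.
case: m => [|m]; first by vm_compute.
by have := hilbert_dirs_framed (ltn0Sn m); case: ifP => _ [].
Qed.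

Lemma admissible_hilbert_edges n :
  triplewise admissible (edges (inflections (hilbert n))).
Proof.
have u2_neq0 : mesh n.-1 * mesh n.-1 != 0 by rewrite mulf_neq0 ?mesh_neq0.
rewrite edges_inflections /hilbert edges_hilb_aux.
rewrite (merge_parallel_map u2_neq0 (cross_scale _) (scale_add _)).
by rewrite (triplewise_admissible_map u2_neq0 (cross_scale _)) admissible_merged_dirs.
Qed.

Lemma tvecE n k : (0 < k < Ninf n)%N ->
  tvec n k = nth pt0 (edges (inflections (hilbert n))) k.-1.
Proof. by case: k => // k /andP[_ lt_kN]; rewrite nth_edges. Qed.

Theorem mainTheorem11 (n : nat) : (1 <= n)%N ->
  forall k : nat, (2 <= k)%N -> (k <= Ninf n - 2)%N ->
    cross (tvec n k.-1) (tvec n k) != 0 /\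
    kappa n k \in [:: 1; -1; 2; -2; 1/2; -(1/2); 3; 1/3] /\
    kappabar n k = 0.
Proof.
move=> _ [|[|j]] // _ le_jN.
have lt_jN : (j.+3 < Ninf n)%N by lia.
have /and3P[ab_neq0 /eqP ac0 kappa_in] :
    admissible (tvec n j.+1) (tvec n j.+2) (tvec n j.+3).
  rewrite !tvecE ?lt_jN ?(ltn_trans _ lt_jN) //.
  apply: triplewise_nth (admissible_hilbert_edges n) _.
  by rewrite size_edges -/(Ninf n); lia.
split; first exact: ab_neq0.
split; first exact: kappa_in.
by rewrite /kappabar ac0 mul0r.
Qed.
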